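(* Suppose every selected context vector takes one of finitely many values $x_{(1)},\dots,x_{(N)}\in\mathbb R^d$, and let $A_t=I_d+\sum_{\tau=1}^tx_{\tau,a_\tau}x_{\tau,a_\tau}^\top$ (as in the AdaLinUCB algorithm). For $n=1,\dots,N$ let $m_{t,(n)}=\sum_{\tau=1}^t\mathbb 1\{x_{\tau,a_\tau}=x_{(n)}\}$. Then for every $t\ge1$ and every $n=1,\dots,N$, $$\|x_{(n)}\|_{A_{t-1}^{-1}}\le\sqrt{\frac{d}{m_{t-1,(n)}}}.$$
   Context: For a positive definite matrix $A$, $\|x\|_A=\sqrt{x^\top Ax}$. $x_{\tau,a_\tau}$ is the context vector of the arm selected at slot $\tau$; $A_0=I_d$. *)

From mathcomp Require Import all_boot all_order all_algebra.
Set Implicit Arguments. Unset Strict Implicit. Unset Printing Implicit Defensive.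
Import Order.TTheory GRing.Theory Num.Theory.
Local Open Scope ring_scope.

Definition wnorm (R : rcfType) (d : nat) (M : 'M[R]_d) (v : 'cV[R]_d) : R :=
  Num.sqrt ((v^T *m M *m v) ord0 ord0).

(* Selected context vectors: xsel tau is x_{tau+1, a_{tau+1}} (0-based slots).
   Agram xsel t = A_t = I_d + sum_{tau=1}^t x_tau x_tau^T. *)
Definition Agram (R : rcfType) (d : nat) (xsel : nat -> 'cV[R]_d) (t : nat)
  : 'M[R]_d :=
  1%:M + \sum_(tau < t) (xsel tau *m (xsel tau)^T).

Definition mcount (R : rcfType) (d N : nat) (xsel : nat -> 'cV[R]_d)
  (xs : 'I_N -> 'cV[R]_d) (t : nat) (n : 'I_N) : nat :=
  \sum_(tau < t) (xsel tau == xs n).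

(** Put [A = A_(t-1)], [v = x_(n)], [w = A^-1 v] and [s = v^T A^-1 v].  Then
    [s = w^T A w = |w|^2 + sum_tau (x_tau^T w)^2], and each of the [m] slots
    with [x_tau = v] contributes [(v^T w)^2 = s^2], so [m s^2 <= s], that is
    [s <= 1/m <= d/m]. *)

From mathcomp Require Import all_boot all_order all_algebra.
Set Implicit Arguments. Unset Strict Implicit. Unset Printing Implicit Defensive.
Import Order.TTheory GRing.Theory Num.Theory.
Local Open Scope ring_scope.

Lemma cV_dotE (R : pzSemiRingType) d (u v : 'cV[R]_d) :
  (u^T *m v) 0 0 = \sum_i u i 0 * v i 0.
Proof. by rewrite mxE; apply: eq_bigr => i _; rewrite mxE. Qed.

Lemma cV_dotC (R : comPzRingType) d (u v : 'cV[R]_d) :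
  (u^T *m v) 0 0 = (v^T *m u) 0 0.
Proof. by rewrite -[in RHS](trmxK u) -trmx_mul [RHS]mxE. Qed.

Lemma cV_dot_ge0 (R : realDomainType) d (u : 'cV[R]_d) : 0 <= (u^T *m u) 0 0.
Proof. by rewrite cV_dotE sumr_ge0 // => i _; rewrite -expr2 sqr_ge0. Qed.

Lemma cV_dot_eq0 (R : realDomainType) d (u : 'cV[R]_d) :
  ((u^T *m u) 0 0 == 0) = (u == 0).
Proof.
apply/idP/eqP => [|->]; last by rewrite mulmx0 mxE.
rewrite cV_dotE psumr_eq0 => [/allP u0|i _]; last by rewrite -expr2 sqr_ge0.
apply/matrixP => i j; rewrite (ord1 j) mxE.
by have /implyP/(_ isT) := u0 i (mem_index_enum i); rewrite mulf_eq0 orbb => /eqP.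
Qed.

Lemma quad_invmx (R : comUnitRingType) d (A : 'M[R]_d) (v : 'cV[R]_d) :
  A^T = A -> A \in unitmx ->
  v^T *m invmx A *m v = (invmx A *m v)^T *m A *m (invmx A *m v).
Proof.
move=> symA unitA.
by rewrite trmx_mul trmx_inv symA -!mulmxA (mulmxA A) mulmxV // mul1mx.
Qed.

Section Gram.

Variables (R : rcfType) (d : nat) (xsel : nat -> 'cV[R]_d).

Lemma trmx_Agram t : (Agram xsel t)^T = Agram xsel t.
Proof.
rewrite /Agram linearD /= trmx1 linear_sum /=; congr (_ + _).
by apply: eq_bigr => tau _; rewrite trmx_mul trmxK.
Qed.

Lemma quad_Agram t (u : 'cV[R]_d) :
  (u^T *m Agram xsel t *m u) 0 0 =
  (u^T *m u) 0 0 + \sum_(tau < t) ((xsel tau)^T *m u) 0 0 ^+ 2.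
Proof.
rewrite /Agram mulmxDr mulmxDl mulmx1 mxE; congr (_ + _).
rewrite mulmx_sumr mulmx_suml summxE; apply: eq_bigr => tau _.
rewrite !mulmxA -(mulmxA (u^T *m xsel tau)) mxE big_ord1 cV_dotC.
by rewrite expr2.
Qed.

Lemma dot_le_quad_Agram t (u : 'cV[R]_d) :
  (u^T *m u) 0 0 <= (u^T *m Agram xsel t *m u) 0 0.
Proof. by rewrite quad_Agram lerDl sumr_ge0 // => tau _; rewrite sqr_ge0. Qed.

Lemma Agram_unitmx t : Agram xsel t \in unitmx.
Proof.
rewrite -row_free_unit; apply: inj_row_free => r rA0.
have quad0 : (r^T^T *m Agram xsel t *m r^T) 0 0 = 0.
  by rewrite trmxK rA0 mul0mx mxE.
have : (r^T^T *m r^T) 0 0 <= 0 by rewrite -quad0 dot_le_quad_Agram.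
by rewrite le_eqVlt ltNge cV_dot_ge0 orbF cV_dot_eq0 trmx_eq0 => /eqP.
Qed.

Lemma mcount_sqr_quad_invmx_Agram_le N (xs : 'I_N -> 'cV[R]_d) t n
    (s := ((xs n)^T *m invmx (Agram xsel t) *m xs n) 0 0) :
  (mcount xsel xs t n)%:R * s ^+ 2 <= s.
Proof.
set A := Agram xsel t; set w := invmx A *m xs n.
have s_dot : s = ((xs n)^T *m w) 0 0 by rewrite /s -mulmxA.
have s_quad : s = (w^T *m A *m w) 0 0.
  by rewrite /s quad_invmx ?trmx_Agram ?Agram_unitmx.
rewrite {2}s_quad quad_Agram; apply: ler_wpDl; first exact: cV_dot_ge0.
rewrite /mcount natr_sum mulr_suml; apply: ler_sum => tau _.
case: eqP => [->|_]; first by rewrite mul1r s_dot.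
by rewrite mul0r sqr_ge0.
Qed.

End Gram.

Lemma le_inv_of_mul_sqr (R : realFieldType) (m s : R) :
  0 < m -> m * s ^+ 2 <= s -> s <= m^-1.
Proof.
move=> m0; have [s0 _|s0] := lerP s 0.
  by rewrite (le_trans s0) ?invr_ge0 ?ltW.
rewrite expr2 mulrA -[leRHS]mul1r ler_pM2r // => ms1.
by rewrite -(ler_pM2l m0) mulfV ?gt_eqF.
Qed.

Theorem lemma4 (R : rcfType) (d N : nat) (xs : 'I_N -> 'cV[R]_d)
  (xsel : nat -> 'cV[R]_d)
  (hfin : forall tau : nat, exists n : 'I_N, xsel tau = xs n)
  (t : nat) (ht : (1 <= t)%N) (n : 'I_N)
  (hm : (0 < mcount xsel xs t.-1 n)%N) :
  wnorm (invmx (Agram xsel t.-1)) (xs n)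
    <= Num.sqrt (d%:R / (mcount xsel xs t.-1 n)%:R).
Proof.
rewrite /wnorm ler_wsqrtr //.
have [d0|d_gt0] := posnP d.
  by subst d; rewrite [xs n]flatmx0 mulmx0 mxE mul0r.
apply: le_trans (le_inv_of_mul_sqr _ (mcount_sqr_quad_invmx_Agram_le _ _ _ _)) _.
  by rewrite ltr0n.
by rewrite -[leLHS]mul1r ler_wpM2r ?invr_ge0 ?ler1n.
Qed.
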